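(* If $\tau$ is a $\mathfrak{g}$-guarded decomposition of a $\sigma$-structure $\mathcal{A}$, then every clique in the Gaifman graph of $\mathcal{A}$ is contained in $\lambda(p)$ for some $p \in P_{\tau}$.
   Context: $\mathfrak{g}$ is atom, loose or clique guarding; plays are non-empty lists of $\mathfrak{g}$-guarded sets of $\mathcal{A}$, ordered by prefix $\sqsubseteq$, with $\lambda(p)$ the last element. For a focussed play $\langle p,a\rangle$ ($a\in\lambda(p)$), $[p,a]$ is its class under $\langle p,a\rangle\sim\langle q,a'\rangle$ iff $a=a'$, $p\sqcap q$ non-empty, and $a\in\lambda(u)$ for all $u$ on the prefix-order paths from $p\sqcap q$ to $p$ and $q$. A $\mathfrak{g}$-guarded decomposition is a map $\tau$ from $A$ to plays, with image $P_\tau$ (a forest under prefix order), that is reflexive ($a\in\lambda(\tau(a))$), edge covering (Gaifman-adjacent $a,b$ lie in some $\lambda(p)$, $p\in P_\tau$), minimal ($[\tau(a),a]=[q,a]$ implies $\tau(a)\sqsubseteq q$) and vertex connected (for $q$ below some element of $P_\tau$ with $a\in\lambda(q)$, $[\tau(a),a]=[q,a]$). *)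

From mathcomp Require Import all_boot.
Set Implicit Arguments. Unset Strict Implicit. Unset Printing Implicit Defensive.

Record signature := Signature { sym : Type; arity : sym -> nat }.

Record structure (s : signature) := Structure {
  dom :> finType;
  interp : forall R : sym s, (arity R).-tuple dom -> Prop }.

Section Defs.
Variables (s : signature) (A : structure s).

Definition co_atom (a b : A) : Prop :=
  exists (R : sym s) (t : (arity R).-tuple A),
    interp t /\ a \in (t : seq A) /\ b \in (t : seq A).

Definition gaifman_adj (a b : A) : Prop := a != b /\ co_atom a b.

Definition is_clique (C : {set A}) : Prop :=
  forall a b, a \in C -> b \in C -> a != b -> gaifman_adj a b.

End Defs.

Inductive guarding := AtomGuarding | LooseGuarding | CliqueGuarding.

Definition guarded (s : signature) (A : structure s) (g : guarding) (X : {set A}) : Prop :=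
  match g with
  | AtomGuarding =>
      (exists a, X = [set a]) \/
      exists (R : sym s) (t : (arity R).-tuple A),
        interp t /\ {subset X <= (t : seq A)}
  | LooseGuarding =>
      (exists a, X = [set a]) \/ (forall a b, a \in X -> b \in X -> co_atom a b)
  | CliqueGuarding => is_clique X
  end.

Section Plays.
Variables (s : signature) (A : structure s) (g : guarding).

Definition is_play (p : seq {set A}) : Prop :=
  p != [::] /\ forall X, X \in p -> guarded g X.

Definition lam (p : seq {set A}) : {set A} := last set0 p.

Definition pref (p q : seq {set A}) : bool := prefix p q.

Fixpoint meet (p q : seq {set A}) : seq {set A} :=
  match p, q with
  | x :: p', y :: q' => if x == y then x :: meet p' q' else [::]
  | _, _ => [::]
  end.

Definition on_path (r p : seq {set A}) (a : A) : Prop :=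
  forall u, pref r u -> pref u p -> a \in lam u.

Definition sim (p : seq {set A}) (a : A) (q : seq {set A}) (a' : A) : Prop :=
  a = a' /\ meet p q != [::] /\ on_path (meet p q) p a /\ on_path (meet p q) q a.

Definition focussed (p : seq {set A}) (a : A) : Prop := is_play p /\ a \in lam p.

(* [p,a] = [q,a'] : equality of the equivalence classes (within focussed plays) *)
Definition same_class (p : seq {set A}) (a : A) (q : seq {set A}) (a' : A) : Prop :=
  forall r b, focussed r b -> (sim p a r b <-> sim q a' r b).

Definition in_image (tau : A -> seq {set A}) (p : seq {set A}) : Prop :=
  exists c, tau c = p.

Definition guarded_decomposition (tau : A -> seq {set A}) : Prop :=
  (forall a, is_play (tau a))
  /\
  (forall a, a \in lam (tau a))
  /\
  (forall a b, gaifman_adj a b -> exists c, a \in lam (tau c) /\ b \in lam (tau c))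
  /\
  (forall a q, focussed q a -> same_class (tau a) a q a -> pref (tau a) q)
  /\
  (forall a q c, q != [::] -> pref q (tau c) -> a \in lam q -> same_class (tau a) a q a).

End Plays.

(* If b ∈ λ(τ c), vertex connectedness gives [τ b, b] = [τ c, b]; minimality
   then puts τ b below τ c, and since ⟨τ c, b⟩ is related to itself, so is
   ⟨τ b, b⟩ to ⟨τ c, b⟩: b lies in λ(u) for every u between τ b and τ c.
   Now take a ∈ C with τ a longest.  For b ∈ C \ {a}, edge covering gives c with
   a, b ∈ λ(τ c); both τ a and τ b are prefixes of τ c and τ b is not longer,
   so τ b ⊑ τ a ⊑ τ c and hence b ∈ λ(τ a). *)
From mathcomp Require Import all_boot.

Set Implicit Arguments.
Unset Strict Implicit.
Unset Printing Implicit Defensive.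

Lemma prefix_anti (T : eqType) : antisymmetric (@prefix T).
Proof.
move=> s1 s2 /andP[le12 le21].
have /eqP : take (size s1) s2 == s1 by rewrite -prefixE.
suff -> : size s1 = size s2 by rewrite take_size => ->.
by apply/eqP; rewrite eqn_leq !size_prefix.
Qed.

Lemma prefix_common (T : eqType) (s1 s2 s3 : seq T) :
  prefix s1 s3 -> prefix s2 s3 -> size s2 <= size s1 -> prefix s2 s1.
Proof.
rewrite !prefixE => /eqP def_s1 /eqP def_s2 le21.
by rewrite -def_s1 take_takel // def_s2.
Qed.

Section Plays.
Variables (s : signature) (A : structure s).
Implicit Types (p q : seq {set A}) (a : A).

Lemma meet_prefix p q : prefix p q -> meet p q = p.
Proof. by case/prefixP=> r ->; elim: p => //= x p ->; rewrite eqxx. Qed.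

Lemma on_path_refl p a : a \in lam p -> on_path p p a.
Proof. by move=> ap u pu up; have -> : u = p by apply/prefix_anti/andP. Qed.

Lemma sim_refl p a : p != [::] -> a \in lam p -> sim p a p a.
Proof.
move=> p_ne ap; rewrite /sim meet_prefix ?prefix_refl //.
by do !split=> //; exact: on_path_refl.
Qed.

End Plays.

Section Decomposition.
Variables (s : signature) (A : structure s) (g : guarding) (tau : A -> seq {set A}).
Hypothesis tau_dec : guarded_decomposition g tau.

Lemma decomp_same_class b c :
  b \in lam (tau c) -> same_class g (tau b) b (tau c) b.
Proof.
case: tau_dec => play_tau [_ [_ [_ connected_tau]]] b_c.
by apply: connected_tau b_c; [case: (play_tau c) | exact: prefix_refl].
Qed.

Lemma decomp_prefix b c : b \in lam (tau c) -> prefix (tau b) (tau c).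
Proof.
case: tau_dec => play_tau [_ [_ [minimal_tau _]]] b_c.
exact: minimal_tau (conj (play_tau c) b_c) (decomp_same_class b_c).
Qed.

Lemma decomp_on_path b c : b \in lam (tau c) -> on_path (tau b) (tau c) b.
Proof.
case: tau_dec => play_tau _ b_c.
have tau_c_ne : tau c != [::] by case: (play_tau c).
have /(decomp_same_class b_c) [_ sim_bc] : focussed g (tau c) b by split.
have [_ [_ [_]]] := sim_bc (sim_refl tau_c_ne b_c).
by rewrite meet_prefix ?decomp_prefix.
Qed.

Lemma decomp_clique_sub_longest C a :
  is_clique C -> a \in C -> (forall b, b \in C -> size (tau b) <= size (tau a)) ->
  C \subset lam (tau a).
Proof.
case: tau_dec => _ [refl_tau [cover_tau _]] clique_C aC a_longest.
apply/subsetP => b bC; have [<- // | ab] := eqVneq a b.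
have [c [a_c b_c]] := cover_tau a b (clique_C a b aC bC ab).
apply: (decomp_on_path b_c); last exact: decomp_prefix a_c.
exact: prefix_common (decomp_prefix a_c) (decomp_prefix b_c) (a_longest b bC).
Qed.

End Decomposition.

Theorem lemma4p3 (s : signature) (A : structure s) (g : guarding)
    (tau : A -> seq {set A}) :
  guarded_decomposition g tau ->
  forall C : {set A}, C != set0 -> is_clique C ->
    exists c : A, C \subset lam (tau c).
Proof.
move=> tau_dec C /set0Pn[a0 a0C] clique_C.
have [a aC a_longest] := @arg_maxnP _ a0 (mem C) (fun b => size (tau b)) a0C.
by exists a; apply: decomp_clique_sub_longest tau_dec _ _ clique_C aC a_longest.
Qed.
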